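(* For every $n$, the set $\mathrm{Rect}^\ast(n)=\{(a^b): ab=n,\ a,b\ge 2\}$ of nontrivial rectangular partitions of $n$ is an independent set in the partition graph $G_n$; that is, no two distinct nontrivial rectangular partitions of $n$ are adjacent.
   Context: The partition graph $G_n$ has as vertices the integer partitions of $n$; two partitions are adjacent if one is obtained from the other by a single elementary unit transfer followed by reordering: decrease one part by $1$ and either increase a different part by $1$ or create a new part equal to $1$, then delete a part that became $0$ and sort in nonincreasing order (the result being different from the original). $(a^b)$ denotes the partition with $b$ parts all equal to $a$. *)

From mathcomp Require Import all_boot.
Set Implicit Arguments. Unset Strict Implicit. Unset Printing Implicit Defensive.

Definition is_partition (n : nat) (p : seq nat) : bool :=
  sorted geq p && all (fun x => 0 < x) p && (sumn p == n).

Definition normalize (s : seq nat) : seq nat :=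
  sort geq (filter (fun x => 0 < x) s).

(* Elementary unit transfer: decrease part i by 1, then either increase a
   different part j (j < size p, j <> i) or create a new part equal to 1
   (j = size p: incr_nth appends a 1); delete a zero part, sort; the result
   must differ from p. *)
Definition unit_transfer (p q : seq nat) : Prop :=
  exists i j, i < size p /\ j <= size p /\ j <> i /\
    q = normalize (incr_nth (set_nth 0 p i (nth 0 p i).-1) j) /\ q <> p.

Definition partition_adj (n : nat) (p q : seq nat) : Prop :=
  is_partition n p /\ is_partition n q /\ (unit_transfer p q \/ unit_transfer q p).

Definition rect (a b : nat) : seq nat := nseq b a.

(* A unit transfer out of the rectangle (a^b) with a, b >= 2 leaves the
   positive part a - 1 next to some untouched or increased part >= a, so its
   result has two distinct part sizes and is never rectangular. *)
From mathcomp Require Import all_boot.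

Set Implicit Arguments.
Unset Strict Implicit.

Lemma constant_mem_eq (T : eqType) (s : seq T) x y :
  constant s -> x \in s -> y \in s -> x = y.
Proof. by move=> /(constantP x)[z ->]; rewrite !mem_nseq => /andP[_ /eqP->] /andP[_ /eqP->]. Qed.

Lemma mem_normalize s x : (x \in normalize s) = (0 < x) && (x \in s).
Proof. by rewrite mem_sort mem_filter. Qed.

Lemma transfer_rect_parts a b i j : 1 < b -> i < b -> j != i ->
  let s := incr_nth (set_nth 0 (rect a b) i a.-1) j in
  a.-1 \in s /\ exists2 y, y \in s & a <= y.
Proof.
move=> hb ib ji s.
have size_s : b <= size s.
  rewrite size_incr_nth size_set_nth size_nseq (maxn_idPr ib).
  by case: ltnP => // /leqW.
have nth_s k : nth 0 s k = (j == k) + (if k == i then a.-1 else nth 0 (rect a b) k).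
  by rewrite nth_incr_nth nth_set_nth.
pose k := if i == 0 then 1 else 0.
have kb : k < b by rewrite /k; case: ifP => _ //; apply: ltnW.
have ki : k != i by rewrite /k; case: (i =P 0) => [->|/eqP]; last rewrite eq_sym.
split.
- by rewrite -[a.-1](_ : nth 0 s i = _) ?mem_nth ?(leq_trans ib) // nth_s eqxx (negbTE ji).
- exists (nth 0 s k); first exact/mem_nth/(leq_trans kb).
  by rewrite nth_s (negbTE ki) nth_nseq kb leq_addl.
Qed.

Lemma unit_transfer_rect_not_constant a b q : 1 < a -> 1 < b ->
  unit_transfer (rect a b) q -> ~~ constant q.
Proof.
move=> ha hb [i [j [+ [_ [/eqP ji [-> _]]]]]]; rewrite size_nseq => ib.
rewrite nth_nseq ib.
have [pred_a_in [y y_in ay]] := transfer_rect_parts a hb ib ji.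
apply/negP => /constant_mem_eq eq_parts.
have pred_a_pos : 0 < a.-1 by rewrite -ltnS prednK // ltnW.
have y_pos : 0 < y := leq_trans pred_a_pos (leq_trans (leq_pred a) ay).
have := eq_parts a.-1 y; rewrite !mem_normalize pred_a_pos pred_a_in y_pos y_in.
move=> /(_ isT isT) pred_a_y.
by move: ay; rewrite -pred_a_y leqNgt ltn_predL ltnW.
Qed.

Theorem proposition3p5 (n a b c d : nat) :
  2 <= a -> 2 <= b -> 2 <= c -> 2 <= d ->
  a * b = n -> c * d = n ->
  rect a b <> rect c d ->
  ~ partition_adj n (rect a b) (rect c d).
Proof.
move=> ha hb hc hd _ _ _ [_ [_ [ab_cd|cd_ab]]].
- exact: negP (unit_transfer_rect_not_constant ha hb ab_cd) (constant_nseq d c).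
- exact: negP (unit_transfer_rect_not_constant hc hd cd_ab) (constant_nseq b a).
Qed.
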